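(* Let $x_1,\dots,x_N\in\mathbb{R}^M$, let $w_1,\dots,w_N\ge0$, and fix $\Sigma\in\mathbb{R}^{M\times M}$ symmetric positive definite. Let $f(x\mid\mu,\Sigma)$ be the $\mathcal{N}(\mu,\Sigma)$ density and define $$L(\mu)=-\sum_{k=1}^N w_k\prod_{n=k}^N f(x_n\mid\mu,\Sigma),\qquad v_k(\mu)=\sum_{n=k}^N(x_n-\mu).$$ If $\mu\in\mathbb{R}^M$ satisfies $\Sigma\succeq \frac{v_k(\mu)v_k(\mu)^\top}{N-k+1}$ for all $k=1,\dots,N$, then the Hessian $\nabla^2 L(\mu)$ is positive semidefinite.
   Context: In the application $w_k=\pi(k)\prod_{n=1}^{k-1}g(x_n)$ with $\pi$ a prior on the outage time and $g$ the pre-outage density, so that $L$ is the negative (marginal) likelihood of the post-outage parameters. $A\succeq B$ means $A-B$ is positive semidefinite. *)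

From HB Require Import structures.
From mathcomp Require Import all_boot all_order all_algebra.
From mathcomp Require Import all_classical all_reals all_analysis.
Set Implicit Arguments. Unset Strict Implicit. Unset Printing Implicit Defensive.
Import Order.TTheory GRing.Theory Num.Theory.
Import numFieldNormedType.Exports.
Local Open Scope ring_scope.

Definition qform (R : realType) (M : nat) (A : 'M[R]_M) (u : 'rV[R]_M) : R :=
  (u *m A *m u^T) 0 0.

Definition psd (R : realType) (M : nat) (A : 'M[R]_M) : Prop :=
  forall u : 'rV[R]_M, 0 <= qform A u.

Definition spd (R : realType) (M : nat) (A : 'M[R]_M) : Prop :=
  A^T = A /\ forall u : 'rV[R]_M, u != 0 -> 0 < qform A u.

Definition gauss_pdf (R : realType) (M : nat) (Sigma : 'M[R]_M)
  (mu x : 'rV[R]_M) : R :=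
  expR (- (1 / 2) * qform (invmx Sigma) (x - mu))
  / Num.sqrt ((2 * pi) ^+ M * \det Sigma).

(* L(mu) = - sum_k w_k prod_{n >= k} f(x_n | mu, Sigma)   (0-indexed) *)
Definition negLik (R : realType) (M N : nat) (x : 'I_N -> 'rV[R]_M)
  (w : 'I_N -> R) (Sigma : 'M[R]_M) (mu : 'rV[R]_M) : R :=
  - \sum_(k < N) w k * \prod_(n < N | (k <= n)%N) gauss_pdf Sigma mu (x n).

(* v_k(mu) = sum_{n >= k} (x_n - mu)   (0-indexed) *)
Definition vtail (R : realType) (M N : nat) (x : 'I_N -> 'rV[R]_M)
  (mu : 'rV[R]_M) (k : 'I_N) : 'rV[R]_M :=
  \sum_(n < N | (k <= n)%N) (x n - mu).

Definition ebase (R : realType) (M : nat) (i : 'I_M) : 'rV[R]_M := delta_mx 0 i.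

Definition hessian (R : realType) (M : nat) (f : 'rV[R]_M -> R)
  (a : 'rV[R]_M) : 'M[R]_M :=
  \matrix_(i < M, j < M)
    'D_(ebase R i) (fun b => 'D_(ebase R j) f b) a.

From HB Require Import structures.
From mathcomp Require Import all_boot all_order all_algebra.
From mathcomp Require Import all_classical all_reals all_analysis.
From mathcomp Require Import ring.
Set Implicit Arguments. Unset Strict Implicit. Unset Printing Implicit Defensive.
Import Order.TTheory GRing.Theory Num.Theory.
Import numFieldNormedType.Exports.
Local Open Scope ring_scope.

(* Along a line [h |-> a + h u], the product of the densities over a tail [n >= k]
   is a constant times the exponential of a quadratic polynomial in [h], so with
   [S = Sigma^-1], [m_k = N - k] and [v_k = vtail x mu k] the Hessian of [L] at [mu]
   is [sum_k w_k P_k(mu) (m_k S - S v_k^T v_k S)].  Its quadratic form at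
   [u] is [sum_k w_k P_k(mu) (m_k <u,u>_S - <v_k,u>_S^2)], and the hypothesis
   [Sigma >= v_k^T v_k / m_k] tested at [u S] says exactly
   [<v_k,u>_S^2 <= m_k <u,u>_S]. *)

Section LineDerivatives.
Variable R : realType.

Lemma derive_val_line (V : normedModType R) (f : V -> R) (a v : V) (l : R) :
  is_derive (0 : R) 1 (fun h : R => f (h *: v + a)) l -> 'D_v f a = l.
Proof.
move=> fl; rewrite -(@derive_val _ _ _ _ _ _ _ fl) /derive.
suff -> : (fun h : R => h^-1 *: ((f \o shift a) (h *: v) - f a)) =
  (fun h : R => h^-1 *: (((fun h => f (h *: v + a)) \o shift 0) (h *: 1)
                         - (fun h => f (h *: v + a)) 0)) by [].
by apply/funext => h /=; rewrite addr0 scale0r add0r [_%:A]mulr1.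
Qed.

Lemma is_derive0_sum_expR_quadratic n (c al be ga d e : 'I_n -> R) :
  is_derive (0 : R) 1
    (fun h : R => \sum_(k < n)
       c k * expR (al k + h * be k + h ^+ 2 * ga k) * (d k + h * e k))
    (\sum_(k < n) c k * expR (al k) * (be k * d k + e k)).
Proof.
have -> : (fun h : R => \sum_(k < n)
      c k * expR (al k + h * be k + h ^+ 2 * ga k) * (d k + h * e k)) =
    \sum_(k < n) (fun h : R =>
      c k * expR (al k + h * be k + h ^+ 2 * ga k) * (d k + h * e k)).
  by apply/funext => h; rewrite fct_sumE.
apply: is_derive_sum => k; apply: is_derive_eq.
rewrite !(scaler0, scale0r, add0r, addr0, mul0r, mul1r, expr0n) /=.
by rewrite /GRing.scale /=; ring.
Qed.

End LineDerivatives.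

Lemma sum_ord_geq_const (V : nmodType) (N k : nat) (c : V) :
  \sum_(n < N | (k <= n)%N) c = c *+ (N - k).
Proof. by rewrite -sumr_const_nat big_geq_mkord. Qed.

Section QuadraticForm.
Variables (R : realType) (M : nat).
Implicit Types (A B : 'M[R]_M) (u : 'rV[R]_M).

Lemma qformD A B u : qform (A + B) u = qform A u + qform B u.
Proof. by rewrite /qform mulmxDr mulmxDl mxE. Qed.

Lemma qformZ (c : R) A u : qform (c *: A) u = c * qform A u.
Proof. by rewrite /qform -scalemxAr -scalemxAl mxE. Qed.

Lemma qformB A B u : qform (A - B) u = qform A u - qform B u.
Proof. by rewrite qformD -scaleN1r qformZ mulN1r. Qed.

Lemma qform_sum n (A : 'I_n -> 'M[R]_M) u :
  qform (\sum_(k < n) A k) u = \sum_(k < n) qform (A k) u.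
Proof.
elim/big_ind2: _ => [|? ? ? ? <- <-|//]; last exact: qformD.
by rewrite /qform mulmx0 mul0mx mxE.
Qed.

Lemma qform_outer (b : 'rV[R]_M) u :
  qform (b^T *m b) u = (u *m b^T) 0 0 * (b *m u^T) 0 0.
Proof. by rewrite /qform !mulmxA -[_ *m b *m u^T]mulmxA mxE big_ord1. Qed.

Lemma spd_unitmx (A : 'M[R]_M) : spd A -> A \in unitmx.
Proof.
case=> _ A_pos; rewrite unitmxE unitfE; apply/negP => /det0P [u /A_pos].
by rewrite /qform => + uA0; rewrite uA0 mul0mx mxE ltxx.
Qed.

End QuadraticForm.

Section BilinearForm.
Variables (R : realType) (M : nat) (S : 'M[R]_M).
Hypothesis S_sym : S^T = S.
Implicit Types (y z u v : 'rV[R]_M).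

Definition bil y v : R := (y *m S *m v^T) 0 0.

Lemma qformE y : qform S y = bil y y.
Proof. by []. Qed.

Lemma bilC y v : bil v y = bil y v.
Proof.
rewrite /bil; have -> : v *m S *m y^T = (y *m S *m v^T)^T.
  by rewrite !trmx_mul trmxK S_sym mulmxA.
by rewrite mxE.
Qed.

Lemma bilBl y z v : bil (y - z) v = bil y v - bil z v.
Proof. by rewrite /bil !mulmxBl mxE [X in _ + X]mxE. Qed.

Lemma bilZl (h : R) y v : bil (h *: y) v = h * bil y v.
Proof. by rewrite /bil -!scalemxAl mxE. Qed.

Lemma bilBr y z v : bil v (y - z) = bil v y - bil v z.
Proof. by rewrite -!(bilC v) bilBl. Qed.

Lemma bilZr (h : R) y v : bil v (h *: y) = h * bil v y.
Proof. by rewrite -!(bilC v) bilZl. Qed.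

Lemma bil_suml (I : finType) (P : pred I) (y : I -> 'rV[R]_M) v :
  bil (\sum_(n | P n) y n) v = \sum_(n | P n) bil (y n) v.
Proof. by rewrite /bil !mulmx_suml summxE. Qed.

Lemma bil_subZ y v (h : R) :
  bil (y - h *: v) (y - h *: v) = bil y y - 2 * h * bil y v + h ^+ 2 * bil v v.
Proof. by rewrite bilBl !bilBr !bilZl !bilZr (bilC v y); ring. Qed.

Lemma bil_ebaser y i : bil y (ebase R i) = (y *m S) 0 i.
Proof.
rewrite /bil mxE (bigD1 i) //= big1 => [|l /negbTE nli];
  by rewrite !mxE ?eqxx ?nli ?mulr1 ?mulr0 ?addr0.
Qed.

Lemma bil_ebase i j : bil (ebase R i) (ebase R j) = S i j.
Proof.
rewrite bil_ebaser mxE (bigD1 i) //= big1 => [|l /negbTE nli];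
  by rewrite !mxE ?eqxx ?nli ?mul1r ?mul0r ?addr0.
Qed.

End BilinearForm.

Section GaussianTails.
Variables (R : realType) (M N : nat) (x : 'I_N -> 'rV[R]_M) (w : 'I_N -> R).
Variable Sigma : 'M[R]_M.
Hypotheses (Sigma_sym : Sigma^T = Sigma) (Sigma_unit : Sigma \in unitmx).
Local Notation S := (invmx Sigma).
Local Notation bil := (bil S).

Let S_sym : S^T = S. Proof. by rewrite trmx_inv Sigma_sym. Qed.

Definition tail_const (k : 'I_N) : R :=
  \prod_(n < N | (k <= n)%N) (Num.sqrt ((2 * pi) ^+ M * \det Sigma))^-1.

Definition tail_exponent (k : 'I_N) (b : 'rV[R]_M) : R :=
  \sum_(n < N | (k <= n)%N) (- (1 / 2) * qform S (x n - b)).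

Lemma prod_gauss_pdf_tail (k : 'I_N) b :
  \prod_(n < N | (k <= n)%N) gauss_pdf Sigma b (x n) =
  tail_const k * expR (tail_exponent k b).
Proof.
rewrite expR_sum -big_split /=; apply: eq_bigr => n _.
by rewrite /gauss_pdf mulrC.
Qed.

Lemma tail_const_ge0 k : 0 <= tail_const k.
Proof. by apply: prodr_ge0 => n _; rewrite invr_ge0 sqrtr_ge0. Qed.

Lemma vtail_line k (a u : 'rV[R]_M) (h : R) :
  vtail x (h *: u + a) k = vtail x a k - ((N - k)%:R * h) *: u.
Proof.
rewrite /vtail opprD (eq_bigr (fun n => (x n - a) - h *: u)) => [|n _].
  by rewrite sumrB sum_ord_geq_const mulr_natl scalerMnl.
by rewrite addrA addrAC.
Qed.

Lemma tail_exponent_line k (b v : 'rV[R]_M) (h : R) :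
  tail_exponent k (h *: v + b) = tail_exponent k b
    + h * bil (vtail x b k) v + h ^+ 2 * (- ((N - k)%:R / 2) * bil v v).
Proof.
rewrite /tail_exponent /vtail bil_suml (eq_bigr (fun n =>
  - (1 / 2) * qform S (x n - b) + h * bil (x n - b) v + h ^+ 2 * (- (1 / 2) * bil v v)))
  => [|n _].
  by rewrite !big_split /= -!mulr_sumr sum_ord_geq_const -mulr_natr; ring.
by rewrite opprD addrA addrAC !qformE bil_subZ //; field.
Qed.

Lemma derive_negLik (b v : 'rV[R]_M) :
  'D_v (negLik x w Sigma) b =
  \sum_(k < N) (- w k * tail_const k) * expR (tail_exponent k b) * bil (vtail x b k) v.
Proof.
apply: derive_val_line.
have -> : (fun h : R => negLik x w Sigma (h *: v + b)) = (fun h : R =>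
    \sum_(k < N) (- w k * tail_const k) * expR (tail_exponent k b
      + h * bil (vtail x b k) v + h ^+ 2 * (- ((N - k)%:R / 2) * bil v v)) * (1 + h * 0)).
  apply/funext => h; rewrite /negLik -sumrN; apply: eq_bigr => k _.
  by rewrite prod_gauss_pdf_tail tail_exponent_line; ring.
apply: is_derive_eq; first exact: is_derive0_sum_expR_quadratic.
by apply: eq_bigr => k _; rewrite mulr1 addr0.
Qed.

Lemma derive2_negLik (a u v : 'rV[R]_M) :
  'D_u ('D_v (negLik x w Sigma)) a =
  \sum_(k < N) (- w k * tail_const k) * expR (tail_exponent k a) *
    (bil (vtail x a k) u * bil (vtail x a k) v - (N - k)%:R * bil u v).
Proof.
rewrite (funext (derive_negLik ^~ v)); apply: derive_val_line.
have -> : (fun h : R => \sum_(k < N) (- w k * tail_const k) *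
      expR (tail_exponent k (h *: u + a)) * bil (vtail x (h *: u + a) k) v) =
    (fun h : R => \sum_(k < N) (- w k * tail_const k) * expR (tail_exponent k a
      + h * bil (vtail x a k) u + h ^+ 2 * (- ((N - k)%:R / 2) * bil u u)) *
      (bil (vtail x a k) v + h * (- ((N - k)%:R * bil u v)))).
  apply/funext => h; apply: eq_bigr => k _.
  by rewrite tail_exponent_line vtail_line bilBl bilZl; ring.
exact: is_derive0_sum_expR_quadratic.
Qed.

Lemma hessian_negLik mu :
  hessian (negLik x w Sigma) mu =
  \sum_(k < N) (- w k * tail_const k * expR (tail_exponent k mu)) *:
    ((vtail x mu k *m S)^T *m (vtail x mu k *m S) - (N - k)%:R *: S).
Proof.
apply/matrixP => i j; rewrite mxE derive2_negLik summxE; apply: eq_bigr => k _.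
rewrite bil_ebase !bil_ebaser; set V := vtail x mu k *m S.
rewrite !mxE big_ord1 !mxE; ring.
Qed.

Lemma sqr_bil_le_of_psd (V u : 'rV[R]_M) (m : R) :
  0 < m -> psd (Sigma - m^-1 *: (V^T *m V)) -> bil V u ^+ 2 <= m * bil u u.
Proof.
move=> m_gt0 /(_ (u *m S)); rewrite qformB qformZ qform_outer.
have -> : qform Sigma (u *m S) = bil u u.
  by rewrite /qform -(mulmxA u) mulVmx // mulmx1 trmx_mul S_sym mulmxA.
have -> : (u *m S *m V^T) 0 0 = bil V u by rewrite -/(bil u V) bilC.
have -> : (V *m (u *m S)^T) 0 0 = bil V u by rewrite trmx_mul S_sym mulmxA.
by rewrite subr_ge0 -(ler_pM2l m_gt0) mulVKf ?gt_eqF // expr2.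
Qed.

Lemma psd_hessian_negLik mu : (forall k, 0 <= w k) ->
  (forall k : 'I_N,
     psd (Sigma - ((N - k)%:R)^-1 *: ((vtail x mu k)^T *m vtail x mu k))) ->
  psd (hessian (negLik x w Sigma) mu).
Proof.
move=> w_ge0 Sigma_ge u; rewrite hessian_negLik qform_sum.
apply: sumr_ge0 => k _; rewrite qformZ; set V := vtail x mu k.
have -> : qform ((V *m S)^T *m (V *m S) - (N - k)%:R *: S) u =
    bil V u ^+ 2 - (N - k)%:R * bil u u.
  rewrite qformB qformZ qform_outer trmx_mul S_sym mulmxA expr2.
  by rewrite -/(bil u V) bilC.
have m_gt0 : 0 < (N - k)%:R :> R by rewrite ltr0n subn_gt0.
have c_ge0 : 0 <= w k * tail_const k * expR (tail_exponent k mu).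
  by rewrite !mulr_ge0 ?w_ge0 ?tail_const_ge0 ?expR_ge0.
rewrite !mulNr -mulrN opprB; apply: mulr_ge0 => //.
by rewrite subr_ge0 sqr_bil_le_of_psd.
Qed.

End GaussianTails.

Theorem mainTheorem6 (R : realType) (M N : nat)
  (x : 'I_N -> 'rV[R]_M) (w : 'I_N -> R) (Sigma : 'M[R]_M) (mu : 'rV[R]_M) :
  (forall k, 0 <= w k) ->
  spd Sigma ->
  (forall k : 'I_N,
     psd (Sigma - ((N - k)%:R)^-1 *: ((vtail x mu k)^T *m vtail x mu k))) ->
  psd (hessian (negLik x w Sigma) mu).
Proof.
move=> w_ge0 Sigma_spd; apply: psd_hessian_negLik => //.
- by case: Sigma_spd.
- exact: spd_unitmx.
Qed.
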